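(* Fix $n\ge 1$ and fixed vectors $\mathbf v_0,\dots,\mathbf v_{n+1}\in\mathbb R^d$. For every edge-factored scoring function $f_G:\mathbb R^d\times\mathbb R^d\to\mathbb R$ there exist arc-eager scoring functions $f_{\mathsf{sh}},f_{\mathsf{re}_\curvearrowleft},f_{\mathsf{ra}},f_{\mathsf{re}}:\mathbb R^d\times\mathbb R^d\to\mathbb R$ such that for every projective dependency tree $T$ on $w_0,\dots,w_n$ rooted at $w_0$, the arc-eager score of $T$ equals its edge-factored score $\sum_{(h,m)\in T} f_G(\mathbf v_h,\mathbf v_m)$. (That is, the arc-eager model contains the edge-factored model.)
   Context: Sentence $w_1,\dots,w_n$ with $w_0=\mathrm{ROOT}$ and $w_{n+1}$ an end-of-sentence marker; each position $i$ has a feature vector $\mathbf v_i\in\mathbb R^d$ (bi-LSTM outputs, treated as fixed). A dependency tree is a set of arcs $(h,m)$ (head $h$, modifier $m$). Its edge-factored score under $f_G$ is $\sum_{(h,m)}f_G(\mathbf v_h,\mathbf v_m)$. Arc-eager deduction system (items $[i^b,j]$ with $0\le i<j\le n+1$, $b\in\{0,1\}$; each item carries a score). Axiom: $[0^0,1]$ with score $0$. Rules: - sh: from $[i^b,j]:v$ with $j\le n$ derive $[j^0,j+1]:0$. - ra: from $[i^b,j]:v$ with $j\le n$ derive $[j^1,j+1]:0$. - $\mathsf{re}_\curvearrowleft$: from $[k^b,i]:v_1$ and $[i^0,j]:v_2$ derive $[k^b,j]:v_1+v_2+f_{\mathsf{sh}}(\mathbf v_k,\mathbf v_i)+f_{\mathsf{re}_\curvearrowleft}(\mathbf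 v_i,\mathbf v_j)$; this application adds the arc $(j,i)$ ($w_i$ left-modifies $w_j$). - re: from $[k^b,i]:v_1$ and $[i^1,j]:v_2$ derive $[k^b,j]:v_1+v_2+f_{\mathsf{ra}}(\mathbf v_k,\mathbf v_i)+f_{\mathsf{re}}(\mathbf v_i,\mathbf v_j)$; this application adds the arc $(k,i)$ ($w_i$ right-modifies $w_k$). Goal: $[0^0,n+1]$. A derivation of the goal encodes the dependency tree consisting of all arcs added by its $\mathsf{re}_\curvearrowleft$ and re applications, and its score is the score of the goal item computed by the rules. The arc-eager score of a tree $T$ is the maximum score over all goal derivations encoding $T$. *)

From Stdlib Require Import Reals List Arith.
From Stdlib Require Fin.
Import ListNotations.
Open Scope R_scope.

Definition vec (d : nat) : Type := Fin.t d -> R.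

(* Derivations in the arc-eager deduction system, for a sentence of length n.
   An inhabitant of [deriv n i b j] is a derivation of the item [i^b, j].
   The side conditions 0 <= i < j <= n+1 hold automatically for every
   derivable item. *)
Inductive deriv (n : nat) : nat -> bool -> nat -> Type :=
| dAx : deriv n 0 false 1
| dSh : forall i b j, deriv n i b j -> (j <= n)%nat -> deriv n j false (S j)
| dRa : forall i b j, deriv n i b j -> (j <= n)%nat -> deriv n j true (S j)
| dReL : forall k b i j, deriv n k b i -> deriv n i false j -> deriv n k b j
| dRe : forall k b i j, deriv n k b i -> deriv n i true j -> deriv n k b j.

Arguments dAx {n}.
Arguments dSh {n i b j} _ _.
Arguments dRa {n i b j} _ _.
Arguments dReL {n k b i j} _ _.
Arguments dRe {n k b i j} _ _.

Fixpoint ae_score {d n : nat} (v : nat -> vec d)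
  (fsh fla fra fre : vec d -> vec d -> R) {i b j} (D : deriv n i b j) : R :=
  match D with
  | dAx => 0
  | dSh _ _ => 0
  | dRa _ _ => 0
  | @dReL _ k _ i j D1 D2 =>
      ae_score v fsh fla fra fre D1 + ae_score v fsh fla fra fre D2
      + fsh (v k) (v i) + fla (v i) (v j)
  | @dRe _ k _ i j D1 D2 =>
      ae_score v fsh fla fra fre D1 + ae_score v fsh fla fra fre D2
      + fra (v k) (v i) + fre (v i) (v j)
  end.

Fixpoint arcs {n i b j} (D : deriv n i b j) : list (nat * nat) :=
  match D with
  | dAx => []
  | dSh D1 _ => arcs D1
  | dRa D1 _ => arcs D1
  | @dReL _ k _ i j D1 D2 => (j, i) :: arcs D1 ++ arcs D2
  | @dRe _ k _ i j D1 D2 => (k, i) :: arcs D1 ++ arcs D2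
  end.

(* Dependency trees on w_0..w_n rooted at w_0 are represented by a head
   function: the arc set is {(hd m, m) | 1 <= m <= n}. *)
Definition in_tree (n : nat) (hd : nat -> nat) (a : nat * nat) : Prop :=
  (1 <= snd a <= n)%nat /\ fst a = hd (snd a).

Inductive anc (n : nat) (hd : nat -> nat) (h : nat) : nat -> Prop :=
| anc_refl : anc n hd h h
| anc_step : forall k, (1 <= k <= n)%nat -> anc n hd h (hd k) -> anc n hd h k.

Definition proj_dep_tree (n : nat) (hd : nat -> nat) : Prop :=
  (forall m, (1 <= m <= n)%nat -> (hd m <= n)%nat /\ hd m <> m) /\
  (* every word is connected to the root w_0 (hence acyclic) *)
  (forall m, (1 <= m <= n)%nat -> anc n hd 0 m) /\
  (* projectivity: the head of every arc dominates all words strictly between *)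
  (forall m k, (1 <= m <= n)%nat ->
     ((hd m < k < m)%nat \/ (m < k < hd m)%nat) -> anc n hd (hd m) k).

Definition ef_score {d : nat} (n : nat) (v : nat -> vec d)
  (fG : vec d -> vec d -> R) (hd : nat -> nat) : R :=
  fold_right Rplus 0 (map (fun m => fG (v (hd m)) (v m)) (seq 1 n)).

Definition encodes {n : nat} (D : deriv n 0 false (S n)) (hd : nat -> nat) : Prop :=
  forall a, In a (arcs D) <-> in_tree n hd a.

(* s is the arc-eager score of the tree hd: the maximum score over goal
   derivations encoding hd (the maximum exists and equals s). *)
Definition is_ae_score {d : nat} (n : nat) (v : nat -> vec d)
  (fsh fla fra fre : vec d -> vec d -> R) (hd : nat -> nat) (s : R) : Prop :=
  (exists D : deriv n 0 false (S n), encodes D hd /\ ae_score v fsh fla fra fre D = s) /\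
  (forall D : deriv n 0 false (S n), encodes D hd -> ae_score v fsh fla fra fre D <= s).

(* Take f_sh = f_re = 0, f_ra = f_G and f_re<-(x, y) = f_G(y, x), so that every
   reduce step scores exactly the arc it adds.  Since sh and ra reset the score to
   0, the score of a derivation of [i^b, j] is the sum of f_G over the arcs of the
   reduce steps outside sh/ra premises, and their modifiers are exactly
   i+1, ..., j-1, each once.  Hence every goal derivation encoding a tree T scores
   exactly the edge-factored score of T, and it remains to build one such
   derivation for a projective T: a span (k, j) whose inner words all have heads
   in [k, j] splits at an inner word i attached to k or to j into two spans of
   the same kind, and i is then attached by re or re<-. *)

From Stdlib Require Import Reals List Arith Lia Permutation Classical Wf_nat.
Import ListNotations.
Open Scope R_scope.

Fixpoint scored_arcs {n i b j} (D : deriv n i b j) : list (nat * nat) :=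
  match D with
  | dAx => []
  | dSh _ _ => []
  | dRa _ _ => []
  | @dReL _ k _ i j D1 D2 => (j, i) :: scored_arcs D1 ++ scored_arcs D2
  | @dRe _ k _ i j D1 D2 => (k, i) :: scored_arcs D1 ++ scored_arcs D2
  end.

Lemma scored_arcs_incl n i b j (D : deriv n i b j) : incl (scored_arcs D) (arcs D).
Proof.
  induction D; simpl; try apply incl_nil_l.
  all: apply incl_cons; [now left | apply incl_tl, incl_app_app; assumption].
Qed.

Lemma deriv_item_lt n i b j (D : deriv n i b j) : (i < j)%nat.
Proof. induction D; lia. Qed.

Lemma seq_split_at k i j : (k < i < j)%nat ->
  seq (S k) (j - S k) = seq (S k) (i - S k) ++ i :: seq (S i) (j - S i).
Proof.
  intros Hkij.
  replace (j - S k)%nat with ((i - S k) + S (j - S i))%nat by lia.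
  rewrite seq_app. replace (S k + (i - S k))%nat with i by lia. reflexivity.
Qed.

Lemma scored_modifiers_perm n i b j (D : deriv n i b j) :
  Permutation (map snd (scored_arcs D)) (seq (S i) (j - S i)).
Proof.
  induction D as [| | |k b i j D1 IH1 D2 IH2|k b i j D1 IH1 D2 IH2]; simpl;
    try (rewrite ?Nat.sub_diag; constructor).
  all: pose proof (deriv_item_lt _ _ _ _ D1); pose proof (deriv_item_lt _ _ _ _ D2);
    rewrite map_app, (seq_split_at k i j) by lia;
    apply Permutation_cons_app, Permutation_app; assumption.
Qed.

Lemma sum_app (l1 l2 : list R) :
  fold_right Rplus 0 (l1 ++ l2) = fold_right Rplus 0 l1 + fold_right Rplus 0 l2.
Proof. induction l1 as [|x l1 IH]; simpl; [ring | rewrite IH; ring]. Qed.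

Lemma sum_perm (l1 l2 : list R) : Permutation l1 l2 ->
  fold_right Rplus 0 l1 = fold_right Rplus 0 l2.
Proof. induction 1; simpl; try ring; congruence. Qed.

Section ArcFactoredScores.

Variables (d n : nat) (v : nat -> vec d) (fG : vec d -> vec d -> R).

Lemma ae_score_scored_arcs i b j (D : deriv n i b j) :
  ae_score v (fun _ _ => 0) (fun x y => fG y x) fG (fun _ _ => 0) D =
  fold_right Rplus 0 (map (fun a => fG (v (fst a)) (v (snd a))) (scored_arcs D)).
Proof.
  induction D; simpl; try reflexivity.
  all: rewrite map_app, sum_app, IHD1, IHD2; ring.
Qed.

Lemma ae_score_tree_deriv (hd : nat -> nat) (D : deriv n 0 false (S n)) :
  (forall a, In a (arcs D) -> in_tree n hd a) ->
  ae_score v (fun _ _ => 0) (fun x y => fG y x) fG (fun _ _ => 0) D =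
  ef_score n v fG hd.
Proof.
  intros Htree. rewrite ae_score_scored_arcs. unfold ef_score.
  replace (map (fun a => fG (v (fst a)) (v (snd a))) (scored_arcs D)) with
    (map (fun m => fG (v (hd m)) (v m)) (map snd (scored_arcs D))).
  - apply sum_perm, Permutation_map.
    pose proof (scored_modifiers_perm _ _ _ _ D) as Hperm.
    now rewrite Nat.sub_1_r in Hperm.
  - rewrite map_map. apply map_ext_in. intros [h m] Hin.
    apply scored_arcs_incl, Htree in Hin as [_ Hh]. simpl in Hh. now subst.
Qed.

End ArcFactoredScores.

Lemma exists_greatest_below (P : nat -> Prop) N :
  (exists m, (m < N)%nat /\ P m) ->
  exists m, (m < N)%nat /\ P m /\ forall m', (m < m' < N)%nat -> ~ P m'.
Proof.
  induction N as [|N IH]; intros [m [Hm Pm]]; [lia|].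
  destruct (classic (P N)) as [PN|nPN].
  - exists N. repeat split; auto; lia.
  - destruct IH as [i [Hi [Pi Hgt]]].
    + exists m. split; auto. destruct (Nat.eq_dec m N); [subst; contradiction | lia].
    + exists i. split; [lia|]. split; [assumption|].
      intros m' Hm'. destruct (Nat.eq_dec m' N); [now subst | apply Hgt; lia].
Qed.

Definition between (a x b : nat) : Prop := (a < x < b \/ b < x < a)%nat.

Section ProjectiveTree.

Variables (n : nat) (hd : nat -> nat).

Lemma anc_trans a b c : anc n hd a b -> anc n hd b c -> anc n hd a c.
Proof. intros Hab Hbc. induction Hbc; auto. now apply anc_step. Qed.

Lemma anc_hd a b : anc n hd a b -> a <> b -> anc n hd a (hd b).
Proof. intros Hab Hne. inversion Hab; subst; [contradiction | assumption]. Qed.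

Definition closed_span (k j : nat) : Prop :=
  forall m, (k < m < j)%nat -> (k <= hd m <= j)%nat.

Hypothesis Htree : proj_dep_tree n hd.

Lemma hd_bound m : (1 <= m <= n)%nat -> (hd m <= n)%nat.
Proof. apply Htree. Qed.

Lemma anc_root x : (x <= n)%nat -> anc n hd 0 x.
Proof. destruct x; [constructor | intros; apply Htree; lia]. Qed.

Lemma anc_antisym x y : (x <= n)%nat -> anc n hd x y -> anc n hd y x -> x = y.
Proof.
  intros Hx. pose proof (anc_root x Hx) as Hroot. clear Hx. revert y.
  induction Hroot as [|x Hx Hroot IH]; intros y Hxy Hyx.
  - inversion Hyx; [reflexivity | lia].
  - destruct (Nat.eq_dec y x) as [->|Hne]; [reflexivity|]. exfalso.
    assert (Hxhd : anc n hd (hd x) x) by (apply anc_step; [assumption | constructor]).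
    assert (Hhdy : hd x = y)
      by (apply IH; [eapply anc_trans; eauto | apply anc_hd; auto]).
    apply (proj2 (proj1 Htree x Hx)), IH; [assumption | now rewrite Hhdy].
Qed.

(* Projectivity makes each head an ancestor of the other. *)
Lemma crossing_arcs_same_head m i :
  (1 <= m <= n)%nat -> (1 <= i <= n)%nat ->
  between (hd m) i m -> between (hd i) m i \/ between (hd i) (hd m) i ->
  hd m = hd i.
Proof.
  intros Hm Hi Hmi Him.
  assert (Hproj : forall x y, (1 <= x <= n)%nat -> between (hd x) y x -> anc n hd (hd x) y)
    by (intros x y Hx Hxy; apply Htree; assumption).
  apply anc_antisym; [apply hd_bound, Hm | |].
  - apply anc_hd; [apply Hproj; assumption | unfold between in *; lia].
  - destruct Him as [Him|Him]; [apply anc_hd|]; try (apply Hproj; assumption).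
    unfold between in *; lia.
Qed.

Lemma closed_span_outer_arc k j : (S k < j)%nat -> (j <= S n)%nat -> closed_span k j ->
  exists m, (k < m < j)%nat /\ (hd m = k \/ hd m = j).
Proof.
  intros Hkj Hj Hclosed. apply NNPP. intros Hnone.
  assert (Hinner : forall x, anc n hd 0 x -> ~ (k < x < j)%nat).
  { induction 1 as [|x Hx _ IH]; [lia|]. intros Hxin.
    pose proof (Hclosed x Hxin).
    assert (hd x <> k /\ hd x <> j) by (split; intros ?; apply Hnone; exists x; auto).
    apply IH; lia. }
  apply (Hinner (S k)); [apply anc_root | ]; lia.
Qed.

Lemma closed_span_split_left k j i : (j <= S n)%nat -> closed_span k j ->
  (k < i < j)%nat -> hd i = k -> (forall m, (i < m < j)%nat -> hd m <> k) ->
  closed_span k i /\ closed_span i j.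
Proof.
  intros Hj Hclosed Hi Hhi Hlast. split; intros m Hm; specialize (Hclosed m ltac:(lia)).
  - split; [lia|]. apply Nat.nlt_ge. intros Hgt.
    enough (hd m = hd i) by lia.
    apply crossing_arcs_same_head; unfold between; lia.
  - split; [|lia]. apply Nat.nlt_ge. intros Hlt.
    specialize (Hlast m Hm).
    enough (hd m = hd i) by lia.
    apply crossing_arcs_same_head; unfold between; lia.
Qed.

Lemma closed_span_split_right k j i : (j <= S n)%nat -> closed_span k j ->
  (k < i < j)%nat -> hd i = j -> (forall m, (k < m < i)%nat -> hd m <> j) ->
  (forall m, (k < m < j)%nat -> hd m <> k) ->
  closed_span k i /\ closed_span i j.
Proof.
  intros Hj Hclosed Hi Hhi Hfirst Hnok. split; intros m Hm; specialize (Hclosed m ltac:(lia)).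
  - split; [lia|]. apply Nat.nlt_ge. intros Hgt.
    specialize (Hfirst m Hm).
    enough (hd m = hd i) by lia.
    apply crossing_arcs_same_head; unfold between; lia.
  - split; [|lia]. apply Nat.nlt_ge. intros Hlt.
    specialize (Hnok m ltac:(lia)).
    enough (hd m = hd i) by lia.
    apply crossing_arcs_same_head; unfold between; lia.
Qed.

(* Split at the last inner word attached to k, or failing that at the first
   inner word attached to j. *)
Lemma closed_span_split k j : (S k < j)%nat -> (j <= S n)%nat -> closed_span k j ->
  exists i, (k < i < j)%nat /\ (hd i = k \/ hd i = j) /\
    closed_span k i /\ closed_span i j.
Proof.
  intros Hkj Hj Hclosed.
  destruct (classic (exists m, (m < j)%nat /\ (k < m /\ hd m = k)%nat)) as [Hk|Hnok].
  - destruct (exists_greatest_below _ _ Hk) as [i [Hi [[Hki Hhi] Hlast]]].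
    assert (Hlast' : forall m, (i < m < j)%nat -> hd m <> k)
      by (intros m Hm Hhm; apply (Hlast m); [lia | split; [lia | assumption]]).
    exists i. split; [lia|]. split; [now left|].
    apply (closed_span_split_left k j i); auto; lia.
  - assert (Hnok' : forall m, (k < m < j)%nat -> hd m <> k)
      by (intros m Hm Hhm; apply Hnok; exists m; repeat split; auto; lia).
    assert (Hex : exists m, (k < m < j)%nat /\ hd m = j).
    { destruct (closed_span_outer_arc k j) as [m [Hm [Hhm|Hhm]]]; auto.
      - exfalso; eapply Hnok'; eauto.
      - eauto. }
    destruct (dec_inh_nat_subset_has_unique_least_element _
                (fun m => classic _) Hex) as [i [[[Hi Hhi] Hleast] _]].
    assert (Hfirst : forall m, (k < m < i)%nat -> hd m <> j).
    { intros m Hm Hhm. enough (i <= m)%nat by lia. apply Hleast; split; auto; lia. }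
    exists i. split; [lia|]. split; [now right|].
    apply (closed_span_split_right k j i); auto; lia.
Qed.

(* The bit b of an item [k^b, j] records that w_k was pushed by ra, i.e. that
   w_k right-modifies its head. *)
Definition right_dep (k : nat) : bool := Nat.ltb (hd k) k.

Lemma unit_span_deriv k b : (k <= n)%nat -> (k = 0%nat -> b = false) ->
  exists D : deriv n k b (S k), arcs D = [].
Proof.
  revert b. induction k as [|k IH]; intros b Hk Hb.
  - rewrite (Hb eq_refl). now exists dAx.
  - destruct (IH false) as [D HD]; [lia | reflexivity |].
    destruct b; [exists (dRa D Hk) | exists (dSh D Hk)]; exact HD.
Qed.

Lemma reduce_span_deriv k b i j (D1 : deriv n k b i) (D2 : deriv n i (right_dep i) j) :
  (k < i < j)%nat -> hd i = k \/ hd i = j ->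
  exists D : deriv n k b j, arcs D = (hd i, i) :: arcs D1 ++ arcs D2.
Proof.
  intros Hkij [Hhi|Hhi]; revert D2; unfold right_dep.
  - rewrite (proj2 (Nat.ltb_lt _ _)) by lia. intros D2.
    exists (dRe D1 D2). simpl. now rewrite Hhi.
  - rewrite (proj2 (Nat.ltb_ge _ _)) by lia. intros D2.
    exists (dReL D1 D2). simpl. now rewrite Hhi.
Qed.

Lemma closed_span_deriv k j : (k < j)%nat -> (j <= S n)%nat -> closed_span k j ->
  exists D : deriv n k (right_dep k) j,
    (forall a, In a (arcs D) -> in_tree n hd a) /\
    (forall m, (k < m < j)%nat -> In (hd m, m) (arcs D)).
Proof.
  remember (j - k)%nat as len eqn:Hlen. revert k j Hlen.
  induction len as [len IH] using lt_wf_ind. intros k j Hlen Hkj Hj Hclosed.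
  destruct (Nat.eq_dec j (S k)) as [->|Hne].
  - destruct (unit_span_deriv k (right_dep k)) as [D HD]; [lia | intros ->; reflexivity |].
    exists D. rewrite HD. split; simpl; [tauto | lia].
  - destruct (closed_span_split k j) as [i [Hi [Hhi [Hki Hij]]]]; try lia; auto.
    destruct (IH (i - k)%nat ltac:(lia) k i) as [D1 [Sound1 Compl1]]; auto; try lia.
    destruct (IH (j - i)%nat ltac:(lia) i j) as [D2 [Sound2 Compl2]]; auto; try lia.
    destruct (reduce_span_deriv k _ i j D1 D2) as [D HD]; auto.
    exists D. rewrite HD. split.
    + intros a [<-|Ha]; [unfold in_tree; simpl; lia|].
      apply in_app_or in Ha as [Ha|Ha]; auto.
    + intros m Hm. destruct (lt_eq_lt_dec m i) as [[Hlt | ->] | Hgt].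
      * right. apply in_or_app. left. apply Compl1. lia.
      * now left.
      * right. apply in_or_app. right. apply Compl2. lia.
Qed.

Lemma proj_tree_encoded : exists D : deriv n 0 false (S n), encodes D hd.
Proof.
  destruct (closed_span_deriv 0 (S n)) as [D [Sound Compl]]; try lia.
  { intros m Hm. pose proof (hd_bound m ltac:(lia)). lia. }
  exists D. intros [h m]. split; [apply Sound|].
  intros [Hm Hh]. simpl in *. subst. apply Compl. lia.
Qed.

End ProjectiveTree.

Theorem lemma1 :
  forall (d n : nat) (v : nat -> vec d), (1 <= n)%nat ->
  forall fG : vec d -> vec d -> R,
  exists fsh fla fra fre : vec d -> vec d -> R,
  forall hd : nat -> nat, proj_dep_tree n hd ->
    is_ae_score n v fsh fla fra fre hd (ef_score n v fG hd).
Proof.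
  intros d n v _ fG.
  exists (fun _ _ => 0), (fun x y => fG y x), fG, (fun _ _ => 0).
  intros hd Htree. split.
  - destruct (proj_tree_encoded n hd Htree) as [D HD].
    exists D. split; [assumption|].
    apply ae_score_tree_deriv. intros a. apply HD.
  - intros D HD. right. apply ae_score_tree_deriv. intros a. apply HD.
Qed.
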